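(* Let $n\geq1$. In $M_n$, both the left-lcm and the right-lcm of the generators $\rho_1,\rho_2,\dots,\rho_n$ are equal to $\rho_n^{\,n}=\rho_1(\rho_n\rho_1)^{n-1}$.
   Context: $M_n$ denotes the monoid with generators $\rho_1,\dots,\rho_n$ and relations $\rho_1\rho_n\rho_i=\rho_{i+1}\rho_n$ for $1\leq i\leq n-1$. The right-lcm of a set of elements is a common right-multiple of all of them that left-divides every common right-multiple; the left-lcm is defined symmetrically with left-multiples and right-divisibility. *)

From mathcomp Require Import all_boot.
Set Implicit Arguments. Unset Strict Implicit. Unset Printing Implicit Defensive.

(* The monoid M_n is presented by generators
   rho_1..rho_n (encoded as the letters 1..n, a word is a seq nat) and
   relations rho_1 rho_n rho_i = rho_(i+1) rho_n for 1 <= i <= n-1.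
   Elements of M_n are words over {1..n} modulo the congruence [meq n]. *)

Definition word (n : nat) (w : seq nat) : bool := all (fun a => 0 < a <= n) w.

Inductive mrel (n : nat) : seq nat -> seq nat -> Prop :=
| mrel_gen (i : nat) : 1 <= i <= n - 1 -> mrel n [:: 1; n; i] [:: i.+1; n].

Inductive meq (n : nat) : seq nat -> seq nat -> Prop :=
| meq_refl w : meq n w w
| meq_sym u v : meq n u v -> meq n v u
| meq_trans u v w : meq n u v -> meq n v w -> meq n u w
| meq_rel u v x y : mrel n x y -> meq n (u ++ x ++ v) (u ++ y ++ v).

Definition ldiv (n : nat) (a b : seq nat) : Prop :=
  exists c, word n c /\ meq n (a ++ c) b.

Definition rdiv (n : nat) (a b : seq nat) : Prop :=
  exists c, word n c /\ meq n (c ++ a) b.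

Definition is_right_lcm (n : nat) (S : seq nat -> Prop) (m : seq nat) : Prop :=
  word n m /\ (forall s, S s -> ldiv n s m) /\
  (forall w, word n w -> (forall s, S s -> ldiv n s w) -> ldiv n m w).

Definition is_left_lcm (n : nat) (S : seq nat -> Prop) (m : seq nat) : Prop :=
  word n m /\ (forall s, S s -> rdiv n s m) /\
  (forall w, word n w -> (forall s, S s -> rdiv n s w) -> rdiv n m w).

Definition generators (n : nat) (s : seq nat) : Prop :=
  exists2 i, 1 <= i <= n & s = [:: i].

From mathcomp Require Import all_boot zify.
Set Implicit Arguments. Unset Strict Implicit. Unset Printing Implicit Defensive.

(* That each ρ_i divides Δ^n on both sides follows from the derived relation
   ρ_i Δ^i ρ_m = ρ_(i+m) Δ^i (i + m <= n), which also gives the expression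
   Δ^n = ρ_1 (Δ ρ_1)^(n-1).  Minimality needs a solution of the word problem:
   [nf] computes, letter by letter, a normal form Δ^e0 ρ_(y_k) Δ^(e_k) ... ρ_(y_1)
   Δ^(e_1), and we prove that (1) the normal form of w is congruent to w and
   (2) congruent words have the same normal form; (2) rests on the derived
   relations and on the centrality of Δ^(n+1).  Finally, tracking invariants
   of the computation shows that a common right multiple of ρ_(n-1) and Δ has
   a normal form starting with Δ^n, and that a common left multiple of ρ_1 and
   ρ_2 has a normal form ending with Δ^n up to the central factor Δ^(n+1). *)

Section MonoidMn.
Variable n : nat.

(* [delta k] is the word of Δ^k, where Δ := ρ_n. *)
Local Notation delta k := (nseq k n).

Lemma meq_eq u v : u = v -> meq n u v.
Proof. by move=> ->; exact: meq_refl. Qed.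

Lemma meq_ctx p u v s : meq n u v -> meq n (p ++ u ++ s) (p ++ v ++ s).
Proof.
elim=> [w|u' v' _ IH|u' v' w' _ IH1 _ IH2|u' v' x y r].
- exact: meq_refl.
- exact: meq_sym.
- exact: meq_trans IH1 IH2.
- have E z : p ++ (u' ++ z ++ v') ++ s = (p ++ u') ++ z ++ (v' ++ s).
    by rewrite !catA.
  by rewrite !E; exact: meq_rel.
Qed.

Lemma meq_l p u v : meq n u v -> meq n (p ++ u) (p ++ v).
Proof. by move=> h; have := meq_ctx p [::] h; rewrite !cats0. Qed.

Lemma meq_r u v s : meq n u v -> meq n (u ++ s) (v ++ s).
Proof. by move=> h; have := meq_ctx [::] s h. Qed.

Lemma word_cat u v : word n (u ++ v) = word n u && word n v.
Proof. exact: all_cat. Qed.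

Lemma word_delta k : 0 < n -> word n (delta k).
Proof. by move=> n0; rewrite /word all_nseq n0 leqnn orbT. Qed.

Lemma mrel_word x y : mrel n x y -> word n x /\ word n y.
Proof. case=> i hi; rewrite /word /=; split; apply/and4P || apply/and3P; try split; lia. Qed.

Lemma meq_word u v : meq n u v -> (word n u <-> word n v).
Proof.
elim=> [w|u' v' _ IH|u' v' w' _ IH1 _ IH2|u' v' x y r] //.
- by rewrite IH.
- by rewrite IH1.
- have [hx hy] := mrel_word r.
  by rewrite !word_cat -!/(word n _) hx hy.
Qed.

Lemma rel_gen i : 0 < i < n -> meq n [:: 1; n; i] [:: i.+1; n].
Proof.
move=> hi; have hr : 1 <= i <= n - 1 by lia.
by have := @meq_rel n [::] [::] _ _ (mrel_gen hr); rewrite !cats0.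
Qed.

Lemma rel_shift i m : 0 < i -> 0 < m -> i + m <= n ->
  meq n (i :: delta i ++ [:: m]) ((i + m) :: delta i).
Proof.
elim: i m => [//|[|i] IH] m _ m0 im.
  by rewrite /= add1n; apply: rel_gen; lia.
apply: (meq_trans (v := [:: 1; n] ++ (i.+1 :: delta i.+1 ++ [:: m]))).
  have hi : 0 < i.+1 < n by lia.
  exact: meq_r (delta i.+1 ++ [:: m]) (meq_sym (rel_gen hi)).
apply: (meq_trans (v := [:: 1; n] ++ ((i.+1 + m) :: delta i.+1))).
  by apply: meq_l; apply: IH => //; lia.
have him : 0 < i.+1 + m < n by lia.
by have := meq_r (delta i.+1) (rel_gen him); rewrite /= addSn.
Qed.

Lemma rel_overflow i m : 0 < i < n -> 0 < m < n -> n < i + m ->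
  meq n (i :: delta i ++ [:: m]) ((i + m - n) :: delta i.+1).
Proof.
move=> hi hm him; set a := i + m - n.
have G1 := @rel_shift (n - m) m ltac:(lia) ltac:(lia) ltac:(lia).
have G2 := @rel_shift a (n - m) ltac:(lia) ltac:(lia) ltac:(lia).
have -> : delta i.+1 = delta a ++ (n - m + m) :: delta (n - m).
  have -> : n - m + m = n by lia.
  by rewrite -[n :: _]/(delta (n - m).+1) -nseqD; congr nseq; lia.
apply: meq_sym.
apply: (meq_trans (v := a :: delta a ++ ((n - m) :: delta (n - m) ++ [:: m]))).
  by apply: (meq_l (a :: delta a)); apply: meq_sym.
have -> : a :: delta a ++ ((n - m) :: delta (n - m) ++ [:: m]) =
   (a :: delta a ++ [:: n - m]) ++ (delta (n - m) ++ [:: m]) by rewrite /= -!catA.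
apply: (meq_trans (meq_r _ G2)).
have -> : a + (n - m) = i by lia.
by apply: meq_eq; rewrite cat_cons catA -nseqD; congr (_ :: nseq _ _ ++ _); lia.
Qed.

Lemma delta_snoc k : delta k ++ [:: n] = delta k.+1.
Proof. by rewrite -[[:: n]]/(delta 1) -nseqD addn1. Qed.

Lemma deltaD a b (u : seq nat) : delta a ++ (delta b ++ u) = delta (a + b) ++ u.
Proof. by rewrite catA -nseqD. Qed.

Lemma delta_central_gen k : 0 < k <= n ->
  meq n (k :: delta n.+1) (delta n.+1 ++ [:: k]).
Proof.
move=> hk; case: (ltnP k n) => hkn; last first.
  have -> : k = n by lia.
  by rewrite delta_snoc; exact: meq_refl.
have G1 := @rel_shift (n - k) k ltac:(lia) ltac:(lia) ltac:(lia).
have G2 := @rel_shift k (n - k) ltac:(lia) ltac:(lia) ltac:(lia).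
have E : delta n.+1 = delta k ++ (n - k + k) :: delta (n - k).
  have -> : n - k + k = n by lia.
  by rewrite -[n :: _]/(delta (n - k).+1) -nseqD; congr nseq; lia.
rewrite {1}E.
apply: (meq_trans (v := k :: delta k ++ ((n - k) :: delta (n - k) ++ [:: k]))).
  by apply: (meq_l (k :: delta k)); apply: meq_sym.
have -> : k :: delta k ++ ((n - k) :: delta (n - k) ++ [:: k]) =
   (k :: delta k ++ [:: n - k]) ++ (delta (n - k) ++ [:: k]) by rewrite /= -!catA.
apply: (meq_trans (meq_r _ G2)).
apply: meq_eq; rewrite cat_cons catA -nseqD.
by have -> : k + (n - k) = n by lia.
Qed.

Lemma delta_central w : word n w -> meq n (w ++ delta n.+1) (delta n.+1 ++ w).
Proof.
elim: w => [_|x w IH] /=; first by rewrite cats0; exact: meq_refl.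
move/andP=> [hx hw].
apply: (meq_trans (v := x :: delta n.+1 ++ w)); first exact: (meq_l [:: x] (IH hw)).
by have := meq_r w (delta_central_gen hx); rewrite -catA.
Qed.

(* A state (e0, L) encodes the word Δ^e0 b_k ... b_1 for L = [:: b_1; ...; b_k]
   (most recent block first); a block (y, e) encodes ρ_y Δ^e. *)
Definition block := (nat * nat)%type.
Definition state := (nat * seq block)%type.

Fixpoint blocks_word (L : seq block) : seq nat :=
  if L is (y, e) :: P then blocks_word P ++ y :: delta e else [::].

Definition state_word (s : state) : seq nat := delta s.1 ++ blocks_word s.2.

(* Right multiplication of a state by Δ: the last block absorbs Δ, and a
   block ρ_y Δ^(n+1) releases the central factor Δ^(n+1) to the front. *)
Definition push_delta (s : state) : state :=
  match s with
  | (e0, [::]) => (e0.+1, [::])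
  | (e0, (y, e) :: P) =>
      if e < n then (e0, (y, e.+1) :: P) else (e0 + n.+1, (y, 0) :: P)
  end.

(* Right multiplication of (e0, L) by ρ_k, 0 < k < n: a new block is opened,
   unless the last block is ρ_y Δ^y, which rel_shift / rel_overflow merge
   with ρ_k into ρ_(y+k) Δ^y, Δ^(y+1) or ρ_(y+k-n) Δ^(y+1). *)
Fixpoint push_gen (e0 : nat) (L : seq block) (k : nat) : state :=
  match L with
  | [::] => (e0, [:: (k, 0)])
  | (y, e) :: P =>
      if e != y then (e0, (k, 0) :: L)
      else if y + k < n then iter y push_delta (push_gen e0 P (y + k))
      else if y + k == n then iter y.+1 push_delta (e0, P)
      else iter y.+1 push_delta (push_gen e0 P (y + k - n))
  end.

Definition push (s : state) (x : nat) : state :=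
  if x == n then push_delta s else push_gen s.1 s.2 x.

Definition nf (s : state) (w : seq nat) : state := foldl push s w.

(* Invariant of the reachable states: blocks are proper generators with at
   most n factors Δ, and only the last block may have the shape ρ_y Δ^y. *)
Definition block_ok (p : block) : bool := (0 < p.1 < n) && (p.2 <= n).
Definition detached (p : block) : bool := p.2 != p.1.
Definition valid (s : state) : bool :=
  all block_ok s.2 && all detached (behead s.2).

Lemma nf_cat s u v : nf s (u ++ v) = nf (nf s u) v.
Proof. exact: foldl_cat. Qed.

Lemma nf_cons s x u : nf s (x :: u) = nf (push s x) u.
Proof. by []. Qed.

Lemma nf_delta s m : nf s (delta m) = iter m push_delta s.
Proof. by elim: m s => [//|m IH] s; rewrite iterSr -IH /= /push eqxx. Qed.

Lemma push_lt s x : x < n -> push s x = push_gen s.1 s.2 x.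
Proof. by rewrite /push; case: eqP => // ->; rewrite ltnn. Qed.

Lemma push_n s : push s n = push_delta s.
Proof. by rewrite /push eqxx. Qed.

Lemma valid_cons e0 y e P :
  valid (e0, (y, e) :: P) = [&& 0 < y < n, e <= n, all block_ok P & all detached P].
Proof.
rewrite /valid /block_ok /=; case: P => [|p P] /=; first by rewrite !andbT.
by rewrite !andbA.
Qed.

Lemma valid_tail e0 y e P : valid (e0, (y, e) :: P) -> valid (e0, P).
Proof.
rewrite valid_cons => /and4P [_ _ h1 h2]; rewrite /valid /= h1 /=.
by case: P h2 {h1} => //= p P /andP [].
Qed.

Lemma valid_push_delta s : valid s -> valid (push_delta s).
Proof.
case: s => e0 [|[y e] P] //=; rewrite valid_cons.
by case/and4P=> h1 h2 h3 h4; case: ifP => h; rewrite valid_cons h1 h3 h4 /= ?andbT.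
Qed.

Lemma valid_iter m s : valid s -> valid (iter m push_delta s).
Proof. by elim: m => //= m IH /IH; apply: valid_push_delta. Qed.

Lemma valid_push_gen e0 L k : valid (e0, L) -> 0 < k < n -> valid (push_gen e0 L k).
Proof.
elim: L e0 k => [|[y e] P IH] e0 k; first by move=> _ hk; rewrite /valid /block_ok /= hk.
move=> hv hk /=; have hP := valid_tail hv.
move: (hv); rewrite valid_cons => /and4P [hy he hbP hnP].
case: ifP => hey.
  by rewrite /valid /= /block_ok /= hk hy he hbP /detached /= hey hnP.
case: ifP => h1; first by apply: valid_iter; apply: IH => //; lia.
case: ifP => h2; first by apply: valid_push_delta; exact: valid_iter.
by apply: valid_push_delta; apply: valid_iter; apply: IH => //; lia.
Qed.

Lemma valid_push s x : valid s -> 0 < x <= n -> valid (push s x).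
Proof.
move=> hv hx; rewrite /push; case: eqP => h; first exact: valid_push_delta.
by case: s hv => e0 L hv; apply: valid_push_gen => //; lia.
Qed.

Lemma valid_nf s w : valid s -> word n w -> valid (nf s w).
Proof.
elim: w s => //= x w IH s hv /andP [hx hw]; apply: IH => //; exact: valid_push.
Qed.

Lemma word_blocks L : 0 < n -> all block_ok L -> word n (blocks_word L).
Proof.
move=> n0; elim: L => [|[y e] P IH] //= /andP [/andP [/= hy _] hP].
by rewrite word_cat IH //= word_delta // andbT; lia.
Qed.

Lemma state_word_cons e0 y e P :
  state_word (e0, (y, e) :: P) = state_word (e0, P) ++ y :: delta e.
Proof. by rewrite /state_word /= catA. Qed.

Lemma state_word_push_delta s : 0 < n -> valid s ->
  meq n (state_word (push_delta s)) (state_word s ++ [:: n]).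
Proof.
move=> n0; case: s => e0 [|[y e] P] hv.
  by apply: meq_eq; rewrite /state_word !cats0 delta_snoc.
move: (hv); rewrite valid_cons => /and4P [hy he hbP _].
rewrite /=; case: ifP => h.
  by apply: meq_eq; rewrite /state_word /= -!catA /= delta_snoc.
have -> : e = n by lia.
rewrite /state_word /= -!catA /= nseqD -catA.
apply: meq_l; apply: meq_sym.
rewrite -[y :: _ ++ _]/([:: y] ++ delta n ++ [:: n]) delta_snoc catA.
by apply: delta_central; rewrite word_cat word_blocks //= andbT; lia.
Qed.

Lemma state_word_iter m s : 0 < n -> valid s ->
  meq n (state_word (iter m push_delta s)) (state_word s ++ delta m).
Proof.
move=> n0 hv; elim: m => [|m IH]; first by rewrite cats0; exact: meq_refl.
apply: meq_trans (state_word_push_delta n0 (valid_iter m hv)) _.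
by rewrite -delta_snoc catA; exact: meq_r.
Qed.

Lemma state_word_push_gen e0 L k : valid (e0, L) -> 0 < k < n ->
  meq n (state_word (push_gen e0 L k)) (state_word (e0, L) ++ [:: k]).
Proof.
elim: L e0 k => [|[y e] P IH] e0 k hv hk.
  by apply: meq_eq; rewrite /state_word /= cats0.
have n0 : 0 < n by lia.
have hP := valid_tail hv.
move: (hv); rewrite valid_cons => /and4P [hy he _ _].
rewrite /=; case: ifP => hey.
  by apply: meq_eq; rewrite /state_word /= !catA.
move/negbFE/eqP: hey => hey; subst e.
rewrite state_word_cons -catA.
case: ifP => h1.
  apply: meq_trans (state_word_iter _ n0 (valid_push_gen hP _)) _; first lia.
  apply: meq_trans (meq_r _ (IH _ _ hP _)) _; first lia.
  by rewrite -catA; apply: meq_l; apply: meq_sym; apply: rel_shift; lia.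
case: ifP => h2.
  apply: meq_trans (@state_word_iter y.+1 _ n0 hP) _.
  apply: meq_l; apply: meq_sym; move/eqP: h2 => h2.
  by have := @rel_shift y k ltac:(lia) ltac:(lia) ltac:(lia); rewrite h2.
apply: meq_trans (@state_word_iter y.+1 _ n0 (valid_push_gen hP _)) _; first lia.
apply: meq_trans (meq_r _ (IH _ _ hP _)) _; first lia.
by rewrite -catA; apply: meq_l; apply: meq_sym; apply: rel_overflow; lia.
Qed.

Lemma state_word_push s x : 0 < x <= n -> valid s ->
  meq n (state_word (push s x)) (state_word s ++ [:: x]).
Proof.
move=> hx hv; rewrite /push; case: eqP => h.
  by rewrite h; apply: state_word_push_delta => //; lia.
by case: s hv => e0 L hv; apply: state_word_push_gen => //; lia.
Qed.

Lemma state_word_nf s w : valid s -> word n w ->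
  meq n (state_word (nf s w)) (state_word s ++ w).
Proof.
elim: w s => [|x w IH] s hv /=; first by move=> _; rewrite cats0; exact: meq_refl.
case/andP=> hx hw.
apply: meq_trans (IH _ (valid_push hv hx) hw) _.
by rewrite -cat1s catA; apply: meq_r; exact: state_word_push.
Qed.

Definition shift (d : nat) (s : state) : state := (s.1 + d, s.2).

Lemma push_delta_shift d s : push_delta (shift d s) = shift d (push_delta s).
Proof.
case: s => e0 [|[y e] P] /=; rewrite /shift /=; first by rewrite addSn.
by case: ifP => _ //=; rewrite addnAC.
Qed.

Lemma iter_shift d m s : iter m push_delta (shift d s) = shift d (iter m push_delta s).
Proof. by elim: m => //= m ->; rewrite push_delta_shift. Qed.

Lemma push_gen_shift d e0 L k : push_gen (e0 + d) L k = shift d (push_gen e0 L k).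
Proof.
elim: L e0 k => [|[y e] P IH] e0 k //=.
case: ifP => _ //; case: ifP => _; first by rewrite IH iter_shift.
case: ifP => _; first by have := iter_shift d y.+1 (e0, P).
by rewrite IH iter_shift push_delta_shift.
Qed.

Lemma push_shift d s x : push (shift d s) x = shift d (push s x).
Proof.
rewrite /push; case: eqP => _; first exact: push_delta_shift.
by case: s => e0 L; rewrite /shift /= push_gen_shift.
Qed.

Lemma nf_shift d s w : nf (shift d s) w = shift d (nf s w).
Proof. by elim: w s => //= x w IH s; rewrite push_shift IH. Qed.

Lemma iter_delta_nil m e0 : iter m push_delta (e0, [::]) = (e0 + m, [::]).
Proof. by elim: m => [|m /= ->]; rewrite ?addn0 ?addnS. Qed.

Lemma iter_delta_small m e0 y e P : e + m <= n ->
  iter m push_delta (e0, (y, e) :: P) = (e0, (y, e + m) :: P).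
Proof.
elim: m => [|m IH] h /=; first by rewrite addn0.
by rewrite IH /= ?ifT ?addnS //; lia.
Qed.

Lemma iter_delta_central s : valid s -> iter n.+1 push_delta s = shift n.+1 s.
Proof.
case: s => e0 [|[y e] P]; first by rewrite iter_delta_nil.
rewrite valid_cons => /and4P [_ he _ _].
have -> : n.+1 = e + (1 + (n - e)) by lia.
rewrite !iterD iter_delta_small /= ?ifF; try lia.
by rewrite iter_delta_small ?add0n /shift /=; try congr (_, _); lia.
Qed.

Lemma nf_delta_central X x w : valid X -> 0 < x <= n ->
  nf X (delta n.+1 ++ x :: w) = nf X (x :: delta n.+1 ++ w).
Proof.
move=> hv hx; rewrite nf_cat nf_delta iter_delta_central // nf_shift.
by rewrite [RHS]nf_cons [RHS]nf_cat nf_delta iter_delta_central ?nf_shift //;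
  exact: valid_push.
Qed.

Lemma nf_delta_central_after X a b x w : valid X -> 0 < a <= n -> 0 < x <= n ->
  nf X (a :: delta b ++ delta n.+1 ++ x :: w) =
  nf X (a :: delta b ++ x :: delta n.+1 ++ w).
Proof.
move=> hv ha hx; have n0 : 0 < n by lia.
rewrite -[a :: _ ++ _]/((a :: delta b) ++ _) -[a :: delta b ++ x :: _]/((a :: delta b) ++ _).
rewrite !(nf_cat _ (a :: delta b)) nf_delta_central //.
by apply: valid_nf => //=; rewrite ha word_delta.
Qed.

Lemma push_gen_detached e0 L k :
  (if L is p :: _ then detached p else true) -> push_gen e0 L k = (e0, (k, 0) :: L).
Proof. by case: L => [|[y e] P] // h; rewrite /= ifT. Qed.

Lemma nf_unfold e0 y P w : valid (e0, (y, y) :: P) ->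
  nf (e0, (y, y) :: P) w = nf (e0, P) (y :: delta y ++ w).
Proof.
rewrite valid_cons => /and4P [hy _ _ hn].
rewrite nf_cons push_lt /=; last lia.
rewrite push_gen_detached; last by case: P hn => //= p P /andP [].
by rewrite nf_cat nf_delta iter_delta_small ?add0n //; lia.
Qed.

Definition shift_rule (s : state) : Prop :=
  forall i m w, 0 < i -> 0 < m -> i + m <= n ->
  nf s (i :: delta i ++ m :: w) = nf s ((i + m) :: delta i ++ w).

Definition overflow_rule (s : state) : Prop :=
  forall i m w, 0 < i < n -> 0 < m < n -> n < i + m ->
  nf s (i :: delta i ++ m :: w) = nf s ((i + m - n) :: delta i.+1 ++ w).

Lemma rules_detached e0 L : valid (e0, L) ->
  (if L is p :: _ then detached p else true) ->
  shift_rule (e0, L) /\ overflow_rule (e0, L).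
Proof.
move=> hv hL; split=> i m w hi hm him.
- rewrite nf_cons push_lt /=; last lia.
  rewrite push_gen_detached // nf_cat nf_delta iter_delta_small ?add0n; last lia.
  rewrite nf_cons push_lt /=; last lia.
  rewrite eqxx /=; case: ifP => h1; first by rewrite push_lt // nf_cat nf_delta.
  have -> : i + m = n by lia.
  by rewrite eqxx push_n nf_cat nf_delta -iterSr.
- rewrite nf_cons push_lt /=; last lia.
  rewrite push_gen_detached // nf_cat nf_delta iter_delta_small ?add0n; last lia.
  rewrite nf_cons push_lt /=; last lia.
  rewrite eqxx /= ifF; last lia.
  have -> : (i + m == n) = false by apply/eqP; lia.
  by rewrite (@push_lt _ (i + m - n)) ?push_n ?nf_cat ?nf_delta -?iterSr //; lia.
Qed.

Lemma delta_cons k (u : seq nat) : n :: delta k ++ u = delta k.+1 ++ u.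
Proof. by []. Qed.

Local Ltac same_exponents := congr (nf _ (_ :: delta _ ++ _)); lia.

Lemma shift_rule_step e0 y P : valid (e0, (y, y) :: P) ->
  shift_rule (e0, P) -> overflow_rule (e0, P) -> shift_rule (e0, (y, y) :: P).
Proof.
move=> hv C1 C2 i m w hi hm him; rewrite !nf_unfold //.
move: (hv); rewrite valid_cons => /and4P [hy _ _ _].
have hP := valid_tail hv.
case: (ltngtP (y + i) n) => hyi.
- rewrite (C1 y i) ?deltaD; try lia.
  case: (leqP (y + i + m) n) => hyim.
    rewrite (C1 (y + i) m) ?(C1 y (i + m)) ?deltaD; try lia; same_exponents.
  rewrite (C2 (y + i) m); try lia.
  case: (ltngtP (i + m) n) => him2; try lia.
    rewrite (C2 y (i + m)) ?deltaD; try lia; same_exponents.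
  rewrite him2 delta_cons deltaD; same_exponents.
- rewrite (C2 y i); try lia.
  set a := y + i - n.
  have -> : delta y.+1 ++ delta i ++ m :: w = delta a ++ delta n.+1 ++ m :: w.
    by rewrite !deltaD; congr (nseq _ _ ++ _); lia.
  rewrite nf_delta_central_after ?(C1 a m); try lia.
  case: (ltngtP (i + m) n) => him2; try lia.
    rewrite (C2 y (i + m)) ?deltaD; try lia; same_exponents.
  rewrite him2 delta_cons !deltaD; same_exponents.
- rewrite (C1 y i) ?deltaD; try lia.
  rewrite hyi delta_cons nf_delta_central; try lia.
  case: (ltngtP (i + m) n) => him2; try lia.
    rewrite (C2 y (i + m)) ?deltaD; try lia; same_exponents.
  rewrite him2 delta_cons deltaD; same_exponents.
Qed.

Lemma overflow_rule_step e0 y P : valid (e0, (y, y) :: P) ->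
  shift_rule (e0, P) -> overflow_rule (e0, P) -> overflow_rule (e0, (y, y) :: P).
Proof.
move=> hv C1 C2 i m w hi hm him; rewrite !nf_unfold //.
move: (hv); rewrite valid_cons => /and4P [hy _ _ _].
have hP := valid_tail hv.
case: (ltngtP (y + i) n) => hyi.
- rewrite (C1 y i) ?deltaD; try lia.
  rewrite (C2 (y + i) m) ?(C1 y (i + m - n)) ?deltaD; try lia; same_exponents.
- rewrite (C2 y i); try lia.
  set a := y + i - n.
  have -> : delta y.+1 ++ delta i ++ m :: w = delta a ++ delta n.+1 ++ m :: w.
    by rewrite !deltaD; congr (nseq _ _ ++ _); lia.
  rewrite nf_delta_central_after; try lia.
  case: (leqP (a + m) n) => ham.
    rewrite (C1 a m) ?(C1 y (i + m - n)) ?deltaD; try lia; same_exponents.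
  rewrite (C2 a m) ?(C2 y (i + m - n)) ?deltaD; try lia; same_exponents.
- rewrite (C1 y i) ?deltaD; try lia.
  rewrite hyi delta_cons nf_delta_central ?(C1 y (i + m - n)) ?deltaD; try lia.
  same_exponents.
Qed.

Lemma rules_valid e0 L : valid (e0, L) -> shift_rule (e0, L) /\ overflow_rule (e0, L).
Proof.
elim: L => [|[y e] P IH] hv; first exact: rules_detached.
case: (boolP (e != y)) => hey; first exact: rules_detached.
move/negbNE/eqP: hey => hey; subst e.
have [C1 C2] := IH (valid_tail hv).
by split; [apply: shift_rule_step | apply: overflow_rule_step].
Qed.

Lemma nf_meq s u v : meq n u v -> valid s -> word n u -> nf s u = nf s v.
Proof.
move=> h; elim: h s => [w|u' v' h IH|u' v' w' h1 IH1 h2 IH2|u' v' x y r] s hv hw //.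
- by rewrite IH //; apply/(meq_word h).
- by rewrite IH1 // IH2 //; apply/(meq_word h1).
- rewrite !nf_cat; congr (nf _ v').
  move: hw; rewrite !word_cat => /and3P [hu _ _].
  case: r => i hi; case: (nf s u') (valid_nf hv hu) => e0 L hv'.
  by have := (rules_valid hv').1 1 i [::]; apply; lia.
Qed.

Lemma push_delta_exp s : s.1 <= (push_delta s).1.
Proof. by case: s => e0 [|[y e] P] //=; case: ifP => //= _; lia. Qed.

Lemma iter_exp m s : s.1 <= (iter m push_delta s).1.
Proof. elim: m => //= m IH; exact: leq_trans IH (push_delta_exp _). Qed.

Lemma push_gen_exp e0 L k : e0 <= (push_gen e0 L k).1.
Proof.
elim: L e0 k => [|[y e] P IH] e0 k //=.
case: ifP => _ //; case: ifP => _; first exact: leq_trans (IH e0 (y + k)) (iter_exp _ _).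
case: ifP => _; first exact: (iter_exp y.+1 (e0, P)).
exact: leq_trans (IH e0 (y + k - n)) (iter_exp y.+1 _).
Qed.

Lemma push_exp s x : s.1 <= (push s x).1.
Proof. by rewrite /push; case: eqP => _; [exact: push_delta_exp | exact: push_gen_exp]. Qed.

Lemma nf_exp s w : s.1 <= (nf s w).1.
Proof. by elim: w s => //= x w IH s; exact: leq_trans (push_exp s x) (IH _). Qed.

(* Invariant of the right multiples of ρ_(n-1): either Δ^n is already a
   prefix, or the first (oldest) block is ρ_(n-1) Δ^e or ρ_y Δ^n. *)
Definition first_block_ok (L : seq block) : Prop :=
  L != [::] /\ ((last (0, 0) L).1 = n.-1 \/ (last (0, 0) L).2 = n).

Definition rlcm_inv (s : state) : Prop := n <= s.1 \/ (s.1 = 0 /\ first_block_ok s.2).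

Lemma rlcm_inv_push_delta s : rlcm_inv s -> rlcm_inv (push_delta s).
Proof.
case: s => e0 [|[y e] P]; rewrite /rlcm_inv /= => -[h|[h1 [h2 h3]]] //.
- by left; lia.
- by case: ifP => _ /=; left; lia.
- case: ifP => he /=; last by left; lia.
  right; split=> //; split=> //.
  by case: P h3 {h2} => [|p P] /= h3 //; case: h3 => h3; [left | lia].
Qed.

Lemma rlcm_inv_iter m s : rlcm_inv s -> rlcm_inv (iter m push_delta s).
Proof. by elim: m => //= m IH /IH /rlcm_inv_push_delta. Qed.

Lemma rlcm_inv_push_gen e0 L k : valid (e0, L) -> rlcm_inv (e0, L) -> 0 < k < n ->
  rlcm_inv (push_gen e0 L k).
Proof.
move=> hv; rewrite {1}/rlcm_inv /= => -[h|[h1 h2]] hk.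
  by left; exact: leq_trans h (push_gen_exp _ _ _).
subst e0; elim: L hv h2 k hk => [|[y e] P IH] hv h2 k hk; first by case: h2.
have hP := valid_tail hv.
move: (hv); rewrite valid_cons => /and4P [hy he _ _].
rewrite /=; case: ifP => hey; first by right.
move/negbFE/eqP: hey => hey; subst e.
case: P IH hv h2 hP => [|p P] IH hv h2 hP.
  have hy1 : y = n.-1 by case: h2 => _ /= [] h2; lia.
  rewrite ifF; last lia.
  case: ifP => h3; first by left; rewrite iter_delta_nil /=; lia.
  rewrite /= iter_delta_small /=; last lia.
  by rewrite add0n ifT; [right; split=> //; split=> //=; right | ]; lia.
have h2' : first_block_ok (p :: P) by case: h2.
case: ifP => h; first by apply: rlcm_inv_iter; apply: IH => //; lia.
case: ifP => h'; first by apply: rlcm_inv_push_delta; apply: rlcm_inv_iter; right.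
by apply: rlcm_inv_push_delta; apply: rlcm_inv_iter; apply: IH => //; lia.
Qed.

Lemma rlcm_inv_push s x : valid s -> rlcm_inv s -> 0 < x <= n -> rlcm_inv (push s x).
Proof.
move=> hv hI hx; rewrite /push; case: eqP => h; first exact: rlcm_inv_push_delta.
by case: s hv hI => e0 L hv hI; apply: rlcm_inv_push_gen => //; lia.
Qed.

Lemma rlcm_inv_nf s w : valid s -> rlcm_inv s -> word n w -> rlcm_inv (nf s w).
Proof.
elim: w s => //= x w IH s hv hI /andP [hx hw].
by apply: IH => //; [exact: valid_push | exact: rlcm_inv_push].
Qed.

Lemma iter_delta_gen m e0 y e P : e <= n -> exists e0' e',
  iter m push_delta (e0, (y, e) :: P) = (e0', (y, e') :: P) /\
  (e + m <= n -> e0' = e0 /\ e' = e + m) /\ (n < e + m -> e0 + n.+1 <= e0').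
Proof.
move=> he; elim: m => [|m [e0' [e' [E [h3 h4]]]]].
  by exists e0, e; rewrite addn0; split=> //; split=> //; lia.
rewrite /= E /=; case: ifP => hl.
  exists e0', e'.+1; split=> //; split=> h; last by apply: h4; lia.
  by have [? ?] := h3 ltac:(lia); split=> //; lia.
exists (e0' + n.+1), 0; split=> //; split=> h.
  by have [? ?] := h3 ltac:(lia); lia.
by case: (leqP (e + m) n) => hm; [have [? ?] := h3 hm | have := h4 hm]; lia.
Qed.

(* Trace left in the normal form of a left multiple of ρ_k: Δ^(n+1) is a
   prefix, or the state is Δ^e0 with n < e0 + k, or its last block ρ_y Δ^e
   satisfies n < e + k, y = k + e or y + n = k + e. *)
Definition llcm_trace (k : nat) (s : state) : Prop :=
  n < s.1 \/ (s.2 = [::] /\ n < s.1 + k) \/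
  (exists y e P, s.2 = (y, e) :: P /\ (n < e + k \/ y = k + e \/ y + n = k + e)).

Lemma llcm_trace_iter k m s : valid s -> n < m + k ->
  llcm_trace k (iter m push_delta s).
Proof.
case: s => e0 [|[y e] P] hv h.
  by rewrite iter_delta_nil /llcm_trace /=; right; left; split=> //; lia.
move: (hv); rewrite valid_cons => /and4P [_ he _ _].
have [e0' [e' [-> [h3 h4]]]] := @iter_delta_gen m e0 y e P he.
rewrite /llcm_trace /=; case: (leqP (e + m) n) => hem.
  by have [-> ->] := h3 hem; right; right; exists y, (e + m), P; split=> //; left; lia.
by left; have := h4 hem; lia.
Qed.

Lemma llcm_trace_iter_lt j m s : valid s -> llcm_trace j s -> m < j ->
  llcm_trace (j - m) (iter m push_delta s).
Proof.
case: s => e0 L hv; rewrite /llcm_trace /= => -[h|[[hL h]|[y [e [P [hL h]]]]]] hm.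
- by left; exact: leq_trans h (iter_exp _ (e0, L)).
- by subst L; rewrite iter_delta_nil /=; right; left; split=> //; lia.
subst L; move: (hv); rewrite valid_cons => /and4P [_ he _ _].
have [e0' [e' [-> [h3 h4]]]] := @iter_delta_gen m e0 y e P he.
rewrite /=; case: (leqP (e + m) n) => hem.
  by have [-> ->] := h3 hem; right; right; exists y, (e + m), P; split=> //; lia.
by left; have := h4 hem; lia.
Qed.

Lemma llcm_trace_push_gen e0 L k : valid (e0, L) -> 0 < k < n ->
  llcm_trace k (push_gen e0 L k).
Proof.
elim: L e0 k => [|[y e] P IH] e0 k hv hk.
  by rewrite /llcm_trace /=; right; right; exists k, 0, [::]; split=> //; lia.
have hP := valid_tail hv.
move: (hv); rewrite valid_cons => /and4P [hy _ _ _].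
rewrite /=; case: ifP => hey.
  by rewrite /llcm_trace /=; right; right; exists k, 0, ((y, e) :: P); split=> //; lia.
case: ifP => h1.
  have := @llcm_trace_iter_lt (y + k) y _ (valid_push_gen hP _) (IH e0 (y + k) hP _).
  by rewrite addKn; apply; lia.
case: ifP => h2; first by apply: (@llcm_trace_iter k y.+1 (e0, P)) => //; lia.
by apply: (@llcm_trace_iter k y.+1); [apply: valid_push_gen => // | ]; lia.
Qed.

Lemma llcm_trace_push s k : valid s -> 0 < k <= n -> llcm_trace k (push s k).
Proof.
move=> hv hk; rewrite /push; case: eqP => h.
  by rewrite h; apply: (@llcm_trace_iter n 1) => //; lia.
by case: s hv => e0 L hv; apply: llcm_trace_push_gen => //; lia.
Qed.

Lemma llcm_trace_12 t : valid t -> 1 < n -> llcm_trace 1 t -> llcm_trace 2 t ->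
  n < t.1 \/ (t.2 = [::] /\ n <= t.1) \/
  (exists y e P, t.2 = (y, e) :: P /\ n <= e).
Proof.
case: t => e0 [|[y e] P] hv hn; rewrite /llcm_trace /=.
  by move=> [h|[[_ h]|[y [e [P [h _]]]]]] _ //; [left | right; left; split=> //; lia].
move: (hv); rewrite valid_cons => /and4P [hy he _ _].
move=> [h|[[h _]|[y1 [e1 [P1 [[<- <- _] h]]]]]] //; first by left.
move=> [h'|[[h' _]|[y2 [e2 [P2 [[<- <- _] h']]]]]] //; first by left.
by right; right; exists y, e, P; split=> //; lia.
Qed.

Definition empty_state : state := (0, [::]).

Lemma nf_word w : word n w -> meq n (state_word (nf empty_state w)) w.
Proof. exact: state_word_nf. Qed.

Lemma nf_multiple u c w : word n u -> word n c -> meq n (u ++ c) w ->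
  nf empty_state w = nf (nf empty_state u) c.
Proof.
move=> hu hc huc; rewrite -nf_cat; apply/esym/nf_meq => //.
by rewrite word_cat hu.
Qed.

Lemma word_gen i : 0 < i <= n -> word n [:: i].
Proof. by rewrite /word /= andbT. Qed.

Lemma generators_gen i : 0 < i <= n -> generators n [:: i].
Proof. by exists i. Qed.

(* Minimality of Δ^n among common right multiples: the normal form of a
   right multiple of ρ_(n-1) and of Δ has Δ-exponent at least n. *)
Lemma right_lcm_min w : 1 <= n -> word n w ->
  (forall s, generators n s -> ldiv n s w) -> ldiv n (delta n) w.
Proof.
move=> hn hw H; case: (ltnP 1 n) => hn2; last first.
  by have := H [:: 1] (@generators_gen 1 ltac:(lia)); have -> : n = 1 by lia.
have [c1 [hc1 m1]] := H [:: n.-1] (@generators_gen n.-1 ltac:(lia)).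
have [c2 [hc2 m2]] := H [:: n] (@generators_gen n ltac:(lia)).
set t := nf empty_state w.
have hvt : valid t by exact: valid_nf.
have hI : rlcm_inv t.
  rewrite /t (nf_multiple _ hc1 m1); last by apply: word_gen; lia.
  apply: rlcm_inv_nf => //; first by apply: valid_push => //; lia.
  by rewrite /= push_lt /=; [right; split=> //; split=> //; left | lia].
have h1 : 1 <= t.1.
  rewrite /t (nf_multiple _ hc2 m2); last by apply: word_gen; lia.
  by apply: leq_trans (nf_exp _ _); rewrite /= push_n.
have ht : n <= t.1 by case: hI => // -[h _]; lia.
exists (delta (t.1 - n) ++ blocks_word t.2); split.
  by rewrite word_cat word_delta ?word_blocks //; [case/andP: hvt | lia..].
by rewrite deltaD subnKC //; exact: nf_word.
Qed.

(* Minimality of Δ^n among common left multiples: the normal form of a left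
   multiple of ρ_1 and ρ_2 ends with Δ^n, up to the central factor Δ^(n+1). *)
Lemma left_lcm_min w : 1 <= n -> word n w ->
  (forall s, generators n s -> rdiv n s w) -> rdiv n (delta n) w.
Proof.
move=> hn hw H; case: (ltnP 1 n) => hn2; last first.
  by have := H [:: 1] (@generators_gen 1 ltac:(lia)); have -> : n = 1 by lia.
have [c1 [hc1 m1]] := H [:: 1] (@generators_gen 1 ltac:(lia)).
have [c2 [hc2 m2]] := H [:: 2] (@generators_gen 2 ltac:(lia)).
set t := nf empty_state w.
have hvt : valid t by exact: valid_nf.
have trace k c : 0 < k <= n -> word n c -> meq n (c ++ [:: k]) w -> llcm_trace k t.
  move=> hk hc hck; rewrite /t (nf_multiple hc _ hck) ?word_gen //.
  by apply: llcm_trace_push => //; exact: valid_nf.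
have S : meq n (delta t.1 ++ blocks_word t.2) w by exact: nf_word.
have hb : all block_ok t.2 by case/andP: hvt.
have wb := word_blocks (ltnW hn2) hb.
have n0 : 0 < n by lia.
case: (llcm_trace_12 hvt hn2 (trace 1 c1 ltac:(lia) hc1 m1) (trace 2 c2 ltac:(lia) hc2 m2))
  => [h|[[hL h]|[y [e [P [hL h]]]]]].
- (* Δ^(n+1) is a prefix: move it to the end, past the blocks *)
  exists (delta (t.1 - n.+1) ++ blocks_word t.2 ++ [:: n]); split.
    by rewrite !word_cat word_delta //= wb /=; lia.
  apply: meq_trans _ S; rewrite -!catA /= -/(delta n.+1).
  have -> : delta t.1 = delta (t.1 - n.+1) ++ delta n.+1.
    by rewrite -nseqD subnK.
  by rewrite -catA; apply: meq_l; exact: delta_central.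
-
  exists (delta (t.1 - n)); split; first exact: word_delta.
  by apply: meq_trans _ S; rewrite hL cats0 -nseqD subnK //; exact: meq_refl.
-
  move: hb; rewrite hL /= => /andP [/andP [/= hy he] hbP].
  exists (delta t.1 ++ blocks_word P ++ y :: delta (e - n)); split.
    by rewrite !word_cat word_delta //= word_blocks //= word_delta //= andbT; lia.
  apply: meq_trans _ S; rewrite hL /= -!catA /=; apply: meq_eq.
  by rewrite -[y :: _ ++ _]/((y :: delta (e - n)) ++ delta n) /= -nseqD subnK.
Qed.

(* Every generator divides Δ^n on both sides:
   Δ^n = ρ_i · Δ^i ρ_(n-i) Δ^(n-i-1) = Δ^(i-1) ρ_(n-i) Δ^(n-i) · ρ_i. *)
Lemma gen_ldiv_delta i : 0 < i <= n -> ldiv n [:: i] (delta n).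
Proof.
move=> hi; case: (ltnP i n) => hin; last first.
  have -> : i = n by lia.
  exists (delta n.-1); split; first by apply: word_delta; lia.
  by apply: meq_eq; rewrite -[_ ++ _]/(delta n.-1.+1) prednK //; lia.
exists (delta i ++ (n - i) :: delta (n - i).-1); split.
  by rewrite word_cat /= -/(word n _) !word_delta ?andbT; lia.
have G := @rel_shift i (n - i) ltac:(lia) ltac:(lia) ltac:(lia).
have -> : [:: i] ++ delta i ++ (n - i) :: delta (n - i).-1 =
  (i :: delta i ++ [:: n - i]) ++ delta (n - i).-1 by rewrite /= -catA.
apply: meq_trans (meq_r _ G) _; have -> : i + (n - i) = n by lia.
by apply: meq_eq; rewrite cat_cons -nseqD -[n :: _]/(delta _.+1); congr nseq; lia.
Qed.

Lemma gen_rdiv_delta i : 0 < i <= n -> rdiv n [:: i] (delta n).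
Proof.
move=> hi; case: (ltnP i n) => hin; last first.
  have -> : i = n by lia.
  exists (delta n.-1); split; first by apply: word_delta; lia.
  by apply: meq_eq; rewrite delta_snoc prednK //; lia.
exists (delta i.-1 ++ (n - i) :: delta (n - i)); split.
  by rewrite word_cat /= -/(word n _) !word_delta ?andbT; lia.
have G := @rel_shift (n - i) i ltac:(lia) ltac:(lia) ltac:(lia).
rewrite -catA; apply: meq_trans (meq_l _ G) _; have -> : n - i + i = n by lia.
by apply: meq_eq; rewrite -[n :: _]/(delta _.+1) -nseqD; congr nseq; lia.
Qed.

(* Δ^n = ρ_1 (Δ ρ_1)^(n-1), from ρ_1 (Δ ρ_1)^j = ρ_(j+1) Δ^j by induction. *)
Lemma delta_pow_alt : 1 <= n -> meq n (delta n) (1 :: flatten (nseq (n - 1) [:: n; 1])).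
Proof.
move=> hn.
have X j : j < n -> meq n (1 :: flatten (nseq j [:: n; 1])) (j.+1 :: delta j).
  elim: j => [|j IH] hj; first exact: meq_refl.
  apply: meq_trans (meq_l [:: 1; n] (IH _)) _; first lia.
  by apply: meq_trans (meq_r (delta j) (rel_gen _)) _; [lia | exact: meq_refl].
apply: meq_sym; apply: meq_trans (X (n - 1) _) _; first lia.
have E : (n - 1).+1 = n by lia.
by apply: meq_eq; rewrite {1}E -[n :: _]/(delta (n - 1).+1) E.
Qed.

End MonoidMn.

Unset Implicit Arguments.

Theorem corollary4p16 (n : nat) (hn : 1 <= n) :
  is_right_lcm n (generators n) (nseq n n) /\
  is_left_lcm n (generators n) (nseq n n) /\
  meq n (nseq n n) (1 :: flatten (nseq (n - 1) [:: n; 1])).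
Proof.
have wD : word n (nseq n n) by apply: word_delta.
split; [|split; last exact: delta_pow_alt].
- split=> //; split; first by move=> s [i hi ->]; exact: gen_ldiv_delta.
  by move=> w; exact: right_lcm_min.
- split=> //; split; first by move=> s [i hi ->]; exact: gen_rdiv_delta.
  by move=> w; exact: left_lcm_min.
Qed.
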